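(* Let $X_1,\dots,X_n$ be independent random variables with $X_i\sim\mathrm{Geo}(p_i)$, where $0<p_1\le p_2\le\dots\le p_n<1$, let $X=\sum_{i=1}^n X_i$ and $\mu=\mathbb{E}[X]=\sum_{i=1}^n 1/p_i$. Then for every $t\ge 0$, $$\Pr\big(X>3(\mu+t)\big)\le e^{-\frac{p_1}{2}\mu-p_1 t}.$$
   Context: $\mathrm{Geo}(p)$ denotes the geometric distribution on $\{1,2,\dots\}$ with $\Pr(X=k)=(1-p)^{k-1}p$. *)

From HB Require Import structures.
From mathcomp Require Import all_boot all_order all_algebra.
From mathcomp Require Import all_classical all_reals all_analysis.
Set Implicit Arguments. Unset Strict Implicit. Unset Printing Implicit Defensive.
Import Order.TTheory GRing.Theory Num.Theory.
Local Open Scope classical_set_scope.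
Local Open Scope ring_scope.

(* Mutual independence of finitely many real random variables:
   P(X_0 in B_0, ..., X_{n-1} in B_{n-1}) = prod_i P(X_i in B_i)
   for all measurable B_i (taking B_i = setT covers subfamilies). *)
Definition mutually_independent_RV (d : measure_display) (T : measurableType d)
  (R : realType) (P : probability T R) (n : nat) (X : 'I_n -> {RV P >-> R}) : Prop :=
  forall B : 'I_n -> set R, (forall i, measurable (B i)) ->
    P (\bigcap_(i in [set: 'I_n]) (X i @^-1` B i)) =
    (\big[*%E/1%E]_(i < n) P (X i @^-1` B i))%E.

Definition is_geometric (d : measure_display) (T : measurableType d)
  (R : realType) (P : probability T R) (Y : {RV P >-> R}) (q : R) : Prop :=
  forall k : nat, P [set w | Y w = k.+1%:R] = (((1 - q) ^+ k) * q)%:E.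

From HB Require Import structures.
From mathcomp Require Import all_boot all_order all_algebra.
From mathcomp Require Import all_classical all_reals all_analysis.
From mathcomp Require Import ring lra.
Set Implicit Arguments. Unset Strict Implicit. Unset Printing Implicit Defensive.
Import Order.TTheory GRing.Theory Num.Theory numFieldNormedType.Exports.
Local Open Scope classical_set_scope.
Local Open Scope ring_scope.

(* With [l = p_1 / 3], the moment generating function of [Geo(p)] satisfies
   [E e^(l Y) (p - l) <= p], hence [E e^(l Y) <= e^(p_1 / (2 p))], and Chernoff's
   bound gives [P (X > a) <= e^(-l a + p_1 mu / 2)], which is the claim for
   [a = 3 (mu + t)].  Since only the point masses and the independence of events
   are available, the expectation is taken over the finitely many value
   configurations of the event [forall i, X_i <= K]; its complement has
   probability at most [n (1 - p_1)^K], which vanishes as [K] grows. *)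

Lemma truncated_geometric_mgf_le (R : realType) (q l : R) (K : nat) :
  0 <= q -> q <= 1 -> 0 <= l ->
  (\sum_(j < K) (1 - q) ^+ j * q * expR (l * j.+1%:R)) * (q - l) <= q.
Proof.
move=> q0 q1 l0.
set z := expR l; set r := (1 - q) * z; set S := \sum_(j < K) r ^+ j.
have z0 : 0 < z := expR_gt0 l.
have r0 : 0 <= r by apply: mulr_ge0; [lra | exact: ltW].
have S0 : 0 <= S by rewrite sumr_ge0 // => j _; rewrite exprn_ge0.
have -> : \sum_(j < K) (1 - q) ^+ j * q * expR (l * j.+1%:R) = q * z * S.
  rewrite /S big_distrr /=; apply: eq_bigr => j _.
  by rewrite expRM_natr -/z /r exprS exprMn; ring.
have geom : r ^+ K - 1 = (r - 1) * S by rewrite subrX1.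
have zinv : z * expR (- l) = 1 by rewrite -expRD subrr expR0.
have exact_id : q * z * S * (expR (- l) - 1 + q) = q * (1 - r ^+ K).
  have -> : q * z * S * (expR (- l) - 1 + q) = q * S * (z * expR (- l)) - q * S * r.
    by rewrite /r; ring.
  have -> : r ^+ K = 1 + (r - 1) * S by rewrite -geom; ring.
  by rewrite zinv; ring.
apply: (le_trans (y := q * z * S * (expR (- l) - 1 + q))).
  apply: ler_wpM2l; first by rewrite !mulr_ge0 // ltW.
  by have := expR_ge1Dx (- l); lra.
by rewrite exact_id ler_piMr // lerBlDr lerDl exprn_ge0.
Qed.

Lemma truncated_geometric_mgf_le_expR (R : realType) (q a : R) (K : nat) :
  0 < q -> q < 1 -> 0 <= a -> a <= q ->
  \sum_(j < K) (1 - q) ^+ j * q * expR (a / 3 * j.+1%:R) <= expR (a / (2 * q)).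
Proof.
move=> q0 q1 a0 aq.
set Y := \sum_(j < K) _.
have Y0 : 0 <= Y.
  by rewrite sumr_ge0 // => j _; rewrite !mulr_ge0 ?exprn_ge0 ?expR_ge0 ?subr_ge0 ?ltW.
have hY : Y * (q - a / 3) <= q.
  by apply: truncated_geometric_mgf_le; [exact: ltW | exact: ltW | exact: divr_ge0].
have Y_le : Y * q <= q + a / 2 by nra.
apply: le_trans (expR_ge1Dx _).
have -> : 1 + a / (2 * q) = (q + a / 2) / q by field; rewrite gt_eqF.
by rewrite ler_pdivlMr.
Qed.

Lemma le_of_le_add_geometric (R : realType) (x C c r : R) : 0 <= r -> r < 1 ->
  (forall K : nat, x <= C + c * r ^+ K) -> x <= C.
Proof.
move=> r0 r1 x_le.
have C_lim : (C + c * r ^+ K) @[K --> \oo] --> C.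
  rewrite -[X in _ --> X]addr0; apply: cvgD; first exact: cvg_cst.
  by rewrite -(mulr0 c); apply: cvgMl_tmp; apply: cvg_expr; rewrite ger0_norm.
rewrite -(cvg_lim _ C_lim) //; apply: limr_ge; first by apply/cvg_ex; exists C.
by near=> K; apply: x_le.
Unshelve. all: end_near.
Qed.

Lemma fsbig_setT (R : Type) (idx : R) (op : Monoid.com_law idx) (I : finType)
  (F : I -> R) :
  \big[op/idx]_(i \in [set: I]) F i = \big[op/idx]_(i : I) F i.
Proof.
rewrite (fsbigE (enum I)) ?enum_uniq //; last by move=> i _; rewrite mem_enum.
by rewrite big_enum_cond /=; apply: eq_bigl => i; rewrite in_setT.
Qed.

Lemma sum_ffun_expR_prod (R : realType) (n K : nat) (l : R) (f : 'I_n -> 'I_K -> R) :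
  \sum_(k : {ffun 'I_n -> 'I_K})
      expR (l * \sum_(i < n) (k i).+1%:R) * \prod_(i < n) f i (k i) =
  \prod_(i < n) \sum_(j < K) f i j * expR (l * j.+1%:R).
Proof.
rewrite bigA_distr_bigA /=; apply: eq_bigr => k _.
by rewrite big_split /= mulrC mulr_sumr expR_sum.
Qed.

Section geometric_truncation.
Context (d : measure_display) (T : measurableType d) (R : realType)
  (P : probability T R).

Definition trunc_event (Y : T -> R) (K : nat) : set T :=
  \big[setU/set0]_(j < K) Y @^-1` [set j.+1%:R].

Lemma measurable_trunc_event (Y : {RV P >-> R}) K : measurable (trunc_event Y K).
Proof.
by apply: bigsetU_measurable => j _; apply: measurable_funPTI; exact: measurable_set1.
Qed.

Lemma geometric_trunc_event (Y : {RV P >-> R}) q K : is_geometric Y q ->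
  P (trunc_event Y K) = (1 - (1 - q) ^+ K)%:E.
Proof.
move=> Y_geo; rewrite measure_bigsetU_ord; last 2 first.
- by move=> j; apply: measurable_funPTI; exact: measurable_set1.
- move=> i j _ _ [w [/= Yi Yj]]; apply: val_inj => /=.
  by move: Yi; rewrite Yj => /eqP; rewrite eqr_nat eqSS => /eqP.
rewrite (eq_bigr _ (fun (j : 'I_K) _ => Y_geo j)) sumEFin.
congr (_%:E); rewrite -big_distrl /=.
have -> : (1 - q) ^+ K = 1 + (1 - q - 1) * \sum_(j < K) (1 - q) ^+ j.
  by rewrite -subrX1; ring.
ring.
Qed.

Lemma geometric_trunc_eventC (Y : {RV P >-> R}) q K : is_geometric Y q ->
  P (~` trunc_event Y K) = ((1 - q) ^+ K)%:E.
Proof.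
move=> Y_geo; rewrite probability_setC; last exact: measurable_trunc_event.
by rewrite (geometric_trunc_event K Y_geo) -EFinB; congr (_%:E); ring.
Qed.

End geometric_truncation.

Lemma measurable_sum_gt (d : measure_display) (T : measurableType d) (R : realType)
  (P : probability T R) (n : nat) (X : 'I_n -> {RV P >-> R}) (a : R) :
  measurable [set w | a < \sum_(i < n) X i w].
Proof.
have := measurable_sum (index_enum 'I_n) (fun i => @measurable_funPT _ _ _ _ (X i))
  measurableT (measurable_itv `]a, +oo[).
by rewrite setTI; congr measurable; apply/seteqP; split => w /=; rewrite in_itv /= andbT.
Qed.

Section independent_geometric_sum.
Context (d : measure_display) (T : measurableType d) (R : realType)
  (P : probability T R) (n : nat) (X : 'I_n -> {RV P >-> R}) (p : 'I_n -> R) (p0 : R).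
Hypotheses (p0_gt0 : 0 < p0) (p0_le : forall i, p0 <= p i) (p_lt1 : forall i, p i < 1)
  (X_geo : forall i, is_geometric (X i) (p i)) (X_indep : mutually_independent_RV X).

Let p_gt0 i : 0 < p i := lt_le_trans p0_gt0 (p0_le i).

Let subp_ge0 i : 0 <= 1 - p i.
Proof. by rewrite subr_ge0 ltW. Qed.

Definition config_event (K : nat) (k : {ffun 'I_n -> 'I_K}) : set T :=
  \bigcap_(i in [set: 'I_n]) X i @^-1` [set (k i).+1%:R].

Lemma measurable_config_event K (k : {ffun 'I_n -> 'I_K}) : measurable (config_event k).
Proof.
apply: fin_bigcap_measurable; first exact: finite_finset.
by move=> i _; apply: measurable_funPTI; exact: measurable_set1.
Qed.

Lemma measure_config_event K (k : {ffun 'I_n -> 'I_K}) :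
  P (config_event k) = (\prod_(i < n) ((1 - p i) ^+ k i * p i))%:E.
Proof.
rewrite X_indep; last by move=> i; exact: measurable_set1.
by rewrite -prodEFin; apply: eq_bigr => i _; exact: X_geo.
Qed.

Lemma trunc_events_sub_config_events K :
  \bigcap_(i in [set: 'I_n]) trunc_event (X i) K `<=`
  \bigcup_(k in [set: {ffun 'I_n -> 'I_K}]) config_event k.
Proof.
move=> w trunc_w.
have /choice[k Xk] : forall i, exists j : 'I_K, X i w = j.+1%:R.
  move=> i; have := trunc_w i I.
  rewrite /trunc_event -(bigcup_mkord K (fun j => X i @^-1` [set j.+1%:R])).
  by move=> -[j /= jK Xj]; exists (Ordinal jK).
by exists [ffun i => k i] => // i _ /=; rewrite ffunE.
Qed.

Lemma chernoff_config_event (a l : R) K (k : {ffun 'I_n -> 'I_K}) : 0 <= l ->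
  (P ([set w | (a < \sum_(i < n) X i w)%R] `&` config_event k) <=
   (expR (l * (\sum_(i < n) (k i).+1%:R - a)) *
    \prod_(i < n) ((1 - p i) ^+ k i * p i))%:E)%E.
Proof.
move=> l0; set s := \sum_(i < n) _.
have prod_ge0 : 0 <= \prod_(i < n) ((1 - p i) ^+ k i * p i).
  by apply: prodr_ge0 => i _; rewrite mulr_ge0 ?exprn_ge0 ?subp_ge0 ?ltW ?p_gt0.
have [a_lt_s | s_le_a] := ltP a s.
- have sub : (P ([set w | (a < \sum_(i < n) X i w)%R] `&` config_event k) <=
               P (config_event k))%E.
    apply: le_measure; last exact: subIsetr.
    + rewrite inE; apply: measurableI; first exact: measurable_sum_gt.
      exact: measurable_config_event.
    + by rewrite inE; exact: measurable_config_event.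
  apply: le_trans sub _; rewrite measure_config_event lee_fin ler_peMl //.
  by apply: le_trans (expR_ge1Dx _); rewrite lerDl mulr_ge0 // subr_ge0 ltW.
- have -> : [set w | a < \sum_(i < n) X i w] `&` config_event k = set0.
    apply/seteqP; split => // w [/= a_lt] Xk; move: a_lt.
    rewrite (eq_bigr (fun i => (k i).+1%:R)); last by move=> i _; exact: Xk.
    by rewrite ltNge s_le_a.
  by rewrite measure0 lee_fin mulr_ge0 ?expR_ge0.
Qed.

Lemma measure_sum_gt_trunc_le (a : R) K :
  (P ([set w | (a < \sum_(i < n) X i w)%R] `&`
      \bigcap_(i in [set: 'I_n]) trunc_event (X i) K) <=
   (expR (- (p0 / 3 * a) + \sum_(i < n) p0 / (2 * p i)))%:E)%E.
Proof.
set S := [set w | (a < \sum_(i < n) X i w)%R].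
set l := p0 / 3.
have l0 : 0 <= l by rewrite divr_ge0 // ltW.
have mS := measurable_sum_gt X a.
apply: (le_trans (content_sub_fsum P (D := [set: {ffun 'I_n -> 'I_K}])
  (A_ := fun k => S `&` config_event k) finite_finset _ _ _)).
- by move=> k _; apply: measurableI => //; exact: measurable_config_event.
- apply: measurableI => //; apply: fin_bigcap_measurable; first exact: finite_finset.
  by move=> i _; exact: measurable_trunc_event.
- by move=> w [Sw /trunc_events_sub_config_events [k _ Ck]]; exists k.
rewrite fsbig_setT /=.
apply: le_trans.
  by apply: lee_sum => k _; exact: (chernoff_config_event _ _ l0).
rewrite /= sumEFin lee_fin.
have -> : \sum_(k : {ffun 'I_n -> 'I_K}) expR (l * (\sum_(i < n) (k i).+1%:R - a)) *
            \prod_(i < n) ((1 - p i) ^+ k i * p i) =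
          expR (- (l * a)) * \sum_(k : {ffun 'I_n -> 'I_K})
            expR (l * \sum_(i < n) (k i).+1%:R) * \prod_(i < n) ((1 - p i) ^+ k i * p i).
  rewrite mulr_sumr; apply: eq_bigr => k _.
  by rewrite mulrA -expRD; congr (expR _ * _); ring.
rewrite (sum_ffun_expR_prod l (fun i (j : 'I_K) => (1 - p i) ^+ j * p i)) expRD.
rewrite ler_wpM2l ?expR_ge0 // expR_sum; apply: ler_prod => i _; apply/andP; split.
  by rewrite sumr_ge0 // => j _; rewrite !mulr_ge0 ?expR_ge0 ?exprn_ge0 ?subp_ge0 ?ltW ?p_gt0.
exact: truncated_geometric_mgf_le_expR (p_gt0 i) (p_lt1 i) (ltW p0_gt0) (p0_le i).
Qed.

Lemma measure_trunc_escape_le K :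
  (P (\bigcup_(i in [set: 'I_n]) ~` trunc_event (X i) K) <=
   (n%:R * (1 - p0) ^+ K)%:E)%E.
Proof.
apply: (le_trans (content_sub_fsum P (D := [set: 'I_n])
  (A_ := fun i => ~` trunc_event (X i) K) finite_finset _ _ _)) => //.
- by move=> i _; apply: measurableC; exact: measurable_trunc_event.
- apply: fin_bigcup_measurable; first exact: finite_finset.
  by move=> i _; apply: measurableC; exact: measurable_trunc_event.
rewrite fsbig_setT /= (eq_bigr _ (fun i _ => geometric_trunc_eventC K (X_geo i))).
rewrite sumEFin lee_fin.
have -> : n%:R * (1 - p0) ^+ K = \sum_(i < n) (1 - p0) ^+ K.
  by rewrite sumr_const card_ord mulr_natl.
apply: ler_sum => i _.
have le_i : 1 - p i <= 1 - p0 by rewrite lerD2l lerN2.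
by apply: lerXn2r; rewrite // nnegrE ?subp_ge0 // (le_trans (subp_ge0 i)).
Qed.

Lemma measure_sum_gt_le (a : R) K :
  (P [set w | (a < \sum_(i < n) X i w)%R] <=
   (expR (- (p0 / 3 * a) + \sum_(i < n) p0 / (2 * p i)) + n%:R * (1 - p0) ^+ K)%:E)%E.
Proof.
set S := [set w | _].
set Tr := \bigcap_(i in [set: 'I_n]) trunc_event (X i) K.
set Esc := \bigcup_(i in [set: 'I_n]) ~` trunc_event (X i) K.
have mTr : measurable Tr.
  apply: fin_bigcap_measurable; first exact: finite_finset.
  by move=> i _; exact: measurable_trunc_event.
have mEsc : measurable Esc.
  apply: fin_bigcup_measurable; first exact: finite_finset.
  by move=> i _; apply: measurableC; exact: measurable_trunc_event.
have mSTr : measurable (S `&` Tr) by apply: measurableI => //; exact: measurable_sum_gt.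
have S_sub : S `<=` (S `&` Tr) `|` Esc.
  move=> w Sw.
  have [Tr_w | /existsNP[i not_trunc]] := pselect (forall i, trunc_event (X i) K w).
  - by left; split => // i _; exact: Tr_w.
  - by right; exists i.
apply: le_trans (le_measure _ _ _ S_sub) _; rewrite ?inE.
- exact: measurable_sum_gt.
- exact: measurableU.
rewrite EFinD; apply: le_trans (measureU2 _ mSTr mEsc) _.
by apply: leeD; [exact: measure_sum_gt_trunc_le | exact: measure_trunc_escape_le].
Qed.

End independent_geometric_sum.

Theorem lemma8 (d : measure_display) (T : measurableType d) (R : realType)
  (P : probability T R) (n : nat) (X : 'I_n.+1 -> {RV P >-> R}) (p : 'I_n.+1 -> R)
  (hp0 : forall i, 0 < p i) (hp1 : forall i, p i < 1)
  (hsort : forall i j : 'I_n.+1, (i <= j)%N -> p i <= p j)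
  (hgeo : forall i, is_geometric (X i) (p i))
  (hind : mutually_independent_RV X)
  (t : R) (ht : 0 <= t) :
  let mu := \sum_(i < n.+1) (p i)^-1 in
  (P [set w | (3 * (mu + t) < \sum_(i < n.+1) X i w)%R] <=
     (expR (- (p ord0 / 2) * mu - p ord0 * t)%R)%:E)%E.
Proof.
cbv zeta; set mu := \sum_(i < n.+1) (p i)^-1; set p0 := p ord0.
have p0_gt0 : 0 < p0 := hp0 ord0.
have p0_lt1 : p0 < 1 := hp1 ord0.
have p0_le i : p0 <= p i by apply: hsort.
have tail_le := measure_sum_gt_le p0_gt0 p0_le hp1 hgeo hind (3 * (mu + t)).
have -> : - (p0 / 2) * mu - p0 * t =
          - (p0 / 3 * (3 * (mu + t))) + \sum_(i < n.+1) p0 / (2 * p i).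
  have -> : \sum_(i < n.+1) p0 / (2 * p i) = p0 / 2 * mu.
    by rewrite /mu mulr_sumr; apply: eq_bigr => i _; rewrite invfM mulrA.
  by field.
have S_fin := fin_num_measure P _ (measurable_sum_gt X (3 * (mu + t))).
rewrite -(fineK S_fin) lee_fin.
apply: (le_of_le_add_geometric (c := n.+1%:R) (r := 1 - p0)); [lra | lra |].
by move=> K; rewrite -lee_fin fineK.
Qed.
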